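(* $\mathrm{SO}\text{-}\mathrm{EKROM}$ is closed under substructures: for every $\mathrm{SO}\text{-}\mathrm{EKROM}(\tau)$ sentence $\Phi$ and all finite $\tau$-structures $\mathcal{A},\mathcal{B}$ with $\mathcal{B}$ a substructure of $\mathcal{A}$, if $\mathcal{A}\models\Phi$ then $\mathcal{B}\models\Phi$.
   Context: For a vocabulary $\tau$ (containing equality), an SO-EKROM$(\tau)$ (second-order extended Krom) formula is a second-order formula of the form $\forall X_1\exists Y_1\cdots\forall X_k\exists Y_k\forall\bar{x}(C_1\wedge\cdots\wedge C_n)$, where $X_i,Y_i$ are relation variables and each clause $C_i$ is a disjunction $\alpha_1\vee\cdots\vee\alpha_l\vee H_1\vee H_2$ in which each $\alpha_s$ is $Q\bar{y}$ or $\neg Q\bar{y}$ with $Q\in\tau\cup\{X_1,\dots,X_k\}$, and each $H_t$ is $Y_i\bar{z}$ or $\neg Y_i\bar{z}$ for some $1\le i\le k$. *)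

From mathcomp Require Import all_boot.
Set Implicit Arguments. Unset Strict Implicit. Unset Printing Implicit Defensive.

(* A relational vocabulary: a finite set of relation symbols with arities.
   Equality is always available (built into the syntax below). *)
Record vocab := Vocab { vsym : finType; varity : vsym -> nat }.

Definition structure (tau : vocab) (T : finType) :=
  forall s : vsym tau, pred ((varity s).-tuple T).

(* B (universe U) is (an isomorphic copy of) a substructure of A (universe T):
   f : U -> T is injective and relations of B are exactly the restrictions
   of those of A. *)
Definition substructure (tau : vocab) (U T : finType)
  (B : structure tau U) (A : structure tau T) (f : U -> T) : Prop :=
  injective f /\ forall (s : vsym tau) (u : (varity s).-tuple U),
    B s u = A s [tuple of map f u].

Section Syntax.
Variables (tau : vocab) (k : nat) (ax ay : 'I_k -> nat) (m : nat).
(* k : number of quantifier blocks forall X_i exists Y_i;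
   ax i, ay i : arities of X_i, Y_i; m : number of first-order variables. *)

Inductive alpha_atom :=
| AEq (x y : 'I_m)
| ARel (s : vsym tau) (a : (varity s).-tuple 'I_m)
| AX (i : 'I_k) (a : (ax i).-tuple 'I_m).

Inductive y_atom := AY (i : 'I_k) (a : (ay i).-tuple 'I_m).

(* a literal is a sign (true = positive) with an atom *)
Record clause := Clause {
  c_alpha : seq (bool * alpha_atom);
  c_heads : seq (bool * y_atom) }.

(* forall X_1 exists Y_1 ... forall X_k exists Y_k forall x_1..x_m (C_1 /\ ... /\ C_n) *)
Record ekrom_formula := EKrom { ek_clauses : seq clause }.

Definition is_ekrom (Phi : ekrom_formula) : Prop :=
  all (fun C => size (c_heads C) <= 2) (ek_clauses Phi).

End Syntax.

Section Semantics.
Variables (tau : vocab) (k : nat) (ax ay : 'I_k -> nat) (m : nat).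
Variables (T : finType) (A : structure tau T).

(* second-order assignments: the relation variable with index i of arity n is
   interpreted by a predicate on sequences, only length-n sequences matter *)
Definition so_assign := nat -> pred (seq T).

Definition upd (S : so_assign) (i : nat) (R : pred (seq T)) : so_assign :=
  fun j => if j == i then R else S j.

Definition alpha_holds (Xs : so_assign) (v : 'I_m -> T)
  (a : @alpha_atom tau k ax m) : bool :=
  match a with
  | AEq x y => v x == v y
  | ARel s t => @A s [tuple of map v t]
  | AX i t => Xs i (map v t)
  end.

Definition y_holds (Ys : so_assign) (v : 'I_m -> T) (a : @y_atom k ay m) : bool :=
  match a with AY i t => Ys i (map v t) end.

Definition lit_holds {L : Type} (h : L -> bool) (l : bool * L) : bool :=
  if l.1 then h l.2 else ~~ h l.2.

Definition clause_holds (Xs Ys : so_assign) (v : 'I_m -> T)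
  (C : @clause tau k ax ay m) : bool :=
  has (lit_holds (alpha_holds Xs v)) (c_alpha C)
  || has (lit_holds (y_holds Ys v)) (c_heads C).

Definition matrix_holds (Phi : @ekrom_formula tau k ax ay m) (Xs Ys : so_assign) : Prop :=
  forall v : 'I_m -> T, all (clause_holds Xs Ys v) (ek_clauses Phi).

(* prefix: remaining r blocks, the next block has index k - r *)
Fixpoint prefix_holds (Phi : @ekrom_formula tau k ax ay m) (r : nat)
  (Xs Ys : so_assign) : Prop :=
  match r with
  | 0 => matrix_holds Phi Xs Ys
  | r'.+1 => forall X : pred (seq T), exists Y : pred (seq T),
      prefix_holds Phi r' (upd Xs (k - r) X) (upd Ys (k - r) Y)
  end.

Definition models (Phi : @ekrom_formula tau k ax ay m) : Prop :=
  prefix_holds Phi k (fun _ => pred0) (fun _ => pred0).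

End Semantics.

From mathcomp Require Import all_boot.

(* Every clause is a first-order universal statement about the relations, so its
   truth at a valuation of B is its truth at the image valuation in A.  For the
   quantifier prefix, a challenge X on B is answered by transporting it to A
   (true exactly on images of X-tuples) and pulling A's answer back along f. *)

Section TransferAlongEmbedding.
Variables (T U : finType) (f : U -> T).
Hypothesis f_inj : injective f.

Definition agree_along (SA : so_assign T) (SB : so_assign U) : Prop :=
  forall i (t : seq U), SA i (map f t) = SB i t.

Lemma agree_along_upd SA SB i XA XB :
  agree_along SA SB -> (forall t, XA (map f t) = XB t) ->
  agree_along (upd SA i XA) (upd SB i XB).
Proof. by move=> SAB XAB j t; rewrite /upd; case: (j == i). Qed.

Definition preimage_f (x : T) : option U := [pick u | f u == x].

Lemma preimage_fK : pcancel f preimage_f.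
Proof.
move=> u; rewrite /preimage_f; case: pickP => [u' /eqP /f_inj -> //|].
by move/(_ u); rewrite eqxx.
Qed.

Definition push_along (X : pred (seq U)) : pred (seq T) :=
  fun s => (s == map f (pmap preimage_f s)) && X (pmap preimage_f s).

Lemma push_along_map X t : push_along X (map f t) = X t.
Proof. by rewrite /push_along (map_pK preimage_fK) eqxx. Qed.

Variables (tau : vocab) (k : nat) (ax ay : 'I_k -> nat) (m : nat).
Variables (A : structure tau T) (B : structure tau U).
Hypothesis sub_rel : forall (s : vsym tau) (u : (varity s).-tuple U),
  B s u = A s [tuple of map f u].

Lemma alpha_holds_along {XA XB} : agree_along XA XB ->
  forall v (a : alpha_atom tau ax m), alpha_holds A XA (f \o v) a = alpha_holds B XB v a.
Proof.
move=> XAB v [x y|s t|i t] /=.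
- exact: (inj_eq f_inj).
- by rewrite sub_rel; congr (A s _); apply: val_inj; rewrite /= map_comp.
- by rewrite map_comp XAB.
Qed.

Lemma y_holds_along {YA YB} : agree_along YA YB ->
  forall v (a : y_atom ay m), y_holds YA (f \o v) a = y_holds YB v a.
Proof. by move=> YAB v [i t] /=; rewrite map_comp YAB. Qed.

Lemma clause_holds_along {XA YA XB YB} : agree_along XA XB -> agree_along YA YB ->
  forall v (C : clause tau ax ay m),
  clause_holds A XA YA (f \o v) C = clause_holds B XB YB v C.
Proof.
move=> XAB YAB v C; rewrite /clause_holds; congr (_ || _); apply: eq_has => -[b a].
  by rewrite /lit_holds (alpha_holds_along XAB).
by rewrite /lit_holds (y_holds_along YAB).
Qed.

Lemma matrix_holds_along (Phi : ekrom_formula tau ax ay m) XA YA XB YB :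
  agree_along XA XB -> agree_along YA YB ->
  matrix_holds A Phi XA YA -> matrix_holds B Phi XB YB.
Proof.
move=> XAB YAB HA v; rewrite -(eq_all (clause_holds_along XAB YAB v)).
exact: HA.
Qed.

Lemma prefix_holds_along (Phi : ekrom_formula tau ax ay m) r XA YA XB YB :
  agree_along XA XB -> agree_along YA YB ->
  prefix_holds A Phi r XA YA -> prefix_holds B Phi r XB YB.
Proof.
elim: r XA YA XB YB => [|r IH] XA YA XB YB XAB YAB /=.
  exact: matrix_holds_along.
move=> HA X; have [Y HY] := HA (push_along X).
exists (fun t => Y (map f t)); apply: IH HY.
  by apply: agree_along_upd => // t; rewrite push_along_map.
exact: agree_along_upd.
Qed.

End TransferAlongEmbedding.

Theorem proposition4p2 (tau : vocab) (k : nat) (ax ay : 'I_k -> nat) (m : nat)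
  (Phi : @ekrom_formula tau k ax ay m) (T U : finType)
  (A : structure tau T) (B : structure tau U) (f : U -> T) :
  is_ekrom Phi -> substructure B A f -> models A Phi -> models B Phi.
Proof.
move=> _ [f_inj sub_rel] HA; by apply: prefix_holds_along HA => //; exact: f_inj.
Qed.
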